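(* Let $Y$ be a set. The Lie subring of $A[Y]$ (with bracket $[a,b]=ab-ba$) generated by $Y$ identifies with $R\mathfrak L[Y]$; that is, the Lie ring morphism $R\mathfrak L[Y]\to A[Y]$ sending each $y\in Y$ to $y$ is injective.
   Context: For $s\geq2$, $\Delta_s(Y)=\{(y_1,\dots,y_s)\in Y^s: y_i=y_j\text{ for some }i\neq j\}$. The reduced free algebra $A[Y]$ is the unital associative ring generated by $Y$ subject to $y_1\cdots y_s=0$ for all $s$ and all $(y_i)\in\Delta_s(Y)$. The reduced free Lie ring $R\mathfrak L[Y]$ is the Lie ring (Lie algebra over $\mathbb Z$) generated by $Y$ subject to $[y_1,[y_2,[\cdots[y_{s-1},y_s]\cdots]]]=0$ for all $s$ and all $(y_i)\in\Delta_s(Y)$. *)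

From HB Require Import structures.
From mathcomp Require Import all_boot all_order all_algebra.
Set Implicit Arguments. Unset Strict Implicit. Unset Printing Implicit Defensive.
Import GRing.Theory.
Local Open Scope ring_scope.

(* A finite sequence of elements of Y has a repetition: (y_1,...,y_s) in
   Delta_s(Y), i.e. y_i = y_j for some i <> j.  (Y is an arbitrary type,
   no decidable equality is needed.) *)
Definition has_repeat (Y : Type) (s : seq Y) : Prop :=
  exists (a b c : seq Y) (x : Y), s = a ++ x :: b ++ x :: c.

Definition is_lie_bracket (L : zmodType) (br : L -> L -> L) : Prop :=
  [/\ (forall x y z, br (x + y) z = br x z + br y z),
      (forall x y z, br x (y + z) = br x y + br x z),
      (forall x, br x x = 0) &
      (forall x y z, br x (br y z) + br y (br z x) + br z (br x y) = 0)].

Definition is_lie_morph (L M : zmodType) (brL : L -> L -> L)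
    (brM : M -> M -> M) (f : L -> M) : Prop :=
  (forall x y, f (x + y) = f x + f y) /\
  (forall x y, f (brL x y) = brM (f x) (f y)).

Fixpoint rnest (L : zmodType) (br : L -> L -> L) (s : seq L) : L :=
  match s with
  | [::] => 0
  | [:: x] => x
  | x :: t => br x (rnest br t)
  end.

Definition is_ring_morph (A M : pzRingType) (f : A -> M) : Prop :=
  [/\ (forall x y, f (x + y) = f x + f y),
      (forall x y, f (x * y) = f x * f y) &
      f 1 = 1].

Definition alg_relations (Y : Type) (A : pzRingType) (i : Y -> A) : Prop :=
  forall s : seq Y, has_repeat s -> \prod_(y <- s) i y = 0.

(* (A, i) is the reduced free algebra A[Y]: the unital associative ring
   presented by generators Y and the relations above (universal property). *)
Definition is_reduced_free_algebra (Y : Type) (A : pzRingType) (i : Y -> A)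
  : Prop :=
  alg_relations i /\
  forall (M : pzRingType) (g : Y -> M), alg_relations g ->
    exists f : A -> M, [/\ is_ring_morph f, (forall y, f (i y) = g y) &
      forall f' : A -> M, is_ring_morph f' -> (forall y, f' (i y) = g y) ->
        forall a, f' a = f a].

Definition lie_relations (Y : Type) (L : zmodType) (br : L -> L -> L)
    (i : Y -> L) : Prop :=
  forall s : seq Y, has_repeat s -> rnest br (map i s) = 0.

Definition is_reduced_free_lie (Y : Type) (L : zmodType) (br : L -> L -> L)
    (i : Y -> L) : Prop :=
  [/\ is_lie_bracket br, lie_relations br i &
  forall (M : zmodType) (brM : M -> M -> M) (g : Y -> M),
    is_lie_bracket brM -> lie_relations brM g ->
    exists f : L -> M, [/\ is_lie_morph br brM f, (forall y, f (i y) = g y) &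
      forall f' : L -> M, is_lie_morph br brM f' -> (forall y, f' (i y) = g y) ->
        forall a, f' a = f a]].

Definition commr (A : pzRingType) (a b : A) : A := a * b - b * a.

From HB Require Import structures.
From mathcomp Require Import all_boot all_order all_algebra.
From mathcomp Require Import boolp.
Set Implicit Arguments. Unset Strict Implicit. Unset Printing Implicit Defensive.
Import GRing.Theory.
Local Open Scope ring_scope.

(* Every element of the reduced free Lie ring RL[Y] is an integer combination of
   right-normed words [y1,[y2,...,yk]], a word with a repeated letter being 0.
   For a letter x, the dual numbers over RL[Y] yield a derivation D_x multiplying
   each word by its number of occurrences of x, i.e. the projection onto the
   words containing x.  The representation a |-> ((l, n) |-> ([a, l] + n D_x a, 0))
   of RL[Y] on RL[Y] x Z kills the product of the generators along any word with
   a repetition, so it factors through A[Y]; evaluating at (0, 1) shows that D_x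
   vanishes on the kernel of RL[Y] -> A[Y].  Finally an element killed by every
   D_x is 0: split off, letter by letter, the words containing that letter. *)

Section AdditiveMaps.
Variables (U V : zmodType) (f : U -> V).
Hypothesis fD : {morph f : x y / x + y}.

Lemma morphD_0 : f 0 = 0.
Proof. by apply: (@addrI _ (f 0)); rewrite -fD !addr0. Qed.

Lemma morphD_N x : f (- x) = - f x.
Proof. by apply: (@addrI _ (f x)); rewrite -fD !subrr morphD_0. Qed.

Lemma morphD_Mn x n : f (x *+ n) = f x *+ n.
Proof. by elim: n => [|n IH]; rewrite ?mulr0n ?morphD_0 // !mulrS fD IH. Qed.

Lemma morphD_Mz x n : f (x *~ n) = f x *~ n.
Proof. by case: n => n; rewrite ?NegzE ?mulrNz ?morphD_N morphD_Mn. Qed.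

Lemma morphD_sum (I : Type) (r : seq I) (F : I -> U) :
  f (\sum_(i <- r) F i) = \sum_(i <- r) f (F i).
Proof. exact: (big_morph f fD morphD_0). Qed.

End AdditiveMaps.

Record add_endo (V : zmodType) := AddEndo {
  endo_fun :> V -> V;
  endo_funD : {morph endo_fun : x y / x + y}
}.

HB.instance Definition _ (V : zmodType) := gen_eqMixin (add_endo V).
HB.instance Definition _ (V : zmodType) := gen_choiceMixin (add_endo V).

Section EndomorphismRing.
Variable V : zmodType.
Implicit Types f g h : add_endo V.

Lemma add_endoP f g : f =1 g -> f = g.
Proof.
case: f g => f fD [g gD] /= /funext eq_fg; subst g.
by congr AddEndo; apply: Prop_irrelevance.
Qed.

Definition endo_zero : add_endo V := @AddEndo V (fun _ => 0) (fun _ _ => esym (addr0 0)).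
Definition endo_one : add_endo V := @AddEndo V id (fun _ _ => erefl).

Fact endo_add_subproof f g : {morph (fun v => f v + g v) : x y / x + y}.
Proof. by move=> x y; rewrite !endo_funD addrACA. Qed.
Definition endo_add f g := AddEndo (endo_add_subproof f g).

Fact endo_opp_subproof f : {morph (fun v => - f v) : x y / x + y}.
Proof. by move=> x y; rewrite endo_funD opprD. Qed.
Definition endo_opp f := AddEndo (endo_opp_subproof f).

Fact endo_mul_subproof f g : {morph (fun v => f (g v)) : x y / x + y}.
Proof. by move=> x y; rewrite !endo_funD. Qed.
Definition endo_mul f g := AddEndo (endo_mul_subproof f g).

Fact endo_addA : associative endo_add.
Proof. by move=> f g h; apply: add_endoP => v /=; rewrite addrA. Qed.
Fact endo_addC : commutative endo_add.
Proof. by move=> f g; apply: add_endoP => v /=; rewrite addrC. Qed.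
Fact endo_add0 : left_id endo_zero endo_add.
Proof. by move=> f; apply: add_endoP => v /=; rewrite add0r. Qed.
Fact endo_addN : left_inverse endo_zero endo_opp endo_add.
Proof. by move=> f; apply: add_endoP => v /=; rewrite addNr. Qed.

HB.instance Definition _ :=
  GRing.isZmodule.Build (add_endo V) endo_addA endo_addC endo_add0 endo_addN.

Fact endo_mulA : associative endo_mul.
Proof. by move=> f g h; apply: add_endoP. Qed.
Fact endo_mul1 : left_id endo_one endo_mul.
Proof. by move=> f; apply: add_endoP. Qed.
Fact endo_mulr1 : right_id endo_one endo_mul.
Proof. by move=> f; apply: add_endoP. Qed.
Fact endo_mulDl : left_distributive endo_mul endo_add.
Proof. by move=> f g h; apply: add_endoP. Qed.
Fact endo_mulDr : right_distributive endo_mul endo_add.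
Proof. by move=> f g h; apply: add_endoP => v /=; rewrite endo_funD. Qed.

HB.instance Definition _ := GRing.Zmodule_isPzRing.Build (add_endo V)
  endo_mulA endo_mul1 endo_mulr1 endo_mulDl endo_mulDr.

Lemma endo_mulE f g v : (f * g) v = f (g v). Proof. by []. Qed.

End EndomorphismRing.

Section LieBracket.
Variables (L : zmodType) (br : L -> L -> L).
Hypothesis hbr : is_lie_bracket br.

Lemma lieDl z : {morph br^~ z : x y / x + y}.
Proof. by case: hbr => hD _ _ _ x y; rewrite hD. Qed.

Lemma lieDr x : {morph br x : y z / y + z}.
Proof. by case: hbr => _ hD _ _ y z; rewrite hD. Qed.

Lemma lie0l x : br 0 x = 0. Proof. exact: morphD_0 (lieDl x). Qed.
Lemma lie0r x : br x 0 = 0. Proof. exact: morphD_0 (lieDr x). Qed.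
Lemma lieNr x y : br x (- y) = - br x y. Proof. exact: (morphD_N (lieDr x) y). Qed.

Lemma lie_anti x y : br x y = - br y x.
Proof.
case: (hbr) => _ _ hxx _; apply/eqP; rewrite -addr_eq0; apply/eqP.
by have := hxx (x + y); rewrite lieDl !lieDr !hxx add0r addr0.
Qed.

Lemma lie_jacobi x y z : br (br x y) z = br x (br y z) - br y (br x z).
Proof.
case: (hbr) => _ _ _ hJ; have /eqP := hJ x y z; rewrite addr_eq0 => /eqP hJxyz.
by rewrite (lie_anti _ z) -hJxyz (lie_anti z x) lieNr.
Qed.

End LieBracket.

Lemma commr_is_lie_bracket (A : pzRingType) : is_lie_bracket (@commr A).
Proof.
rewrite /commr; split.
- by move=> x y z; rewrite mulrDl mulrDr opprD addrACA.
- by move=> x y z; rewrite mulrDl mulrDr opprD addrACA.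
- by move=> x; rewrite subrr.
move=> x y z; rewrite !mulrBr !mulrBl !mulrA !opprB !addrA.
by rewrite (ACl ((1*12)*(7*2)*(3*10)*(5*4)*(11*6)*(9*8)))%AC /= !subrr !addr0.
Qed.

Lemma pairD (U V : zmodType) (a c : U) (b d : V) : (a, b) + (c, d) = (a + c, b + d).
Proof. by []. Qed.

Lemma pairN (U V : zmodType) (a : U) (b : V) : - (a, b) = (- a, - b).
Proof. by []. Qed.

(* The bracket of L[e], e^2 = 0: maps a |-> (a, D a) are Lie morphisms into it
   exactly when D is a derivation. *)
Definition dual_bracket (L : zmodType) (br : L -> L -> L) (u v : L * L) : L * L :=
  (br u.1 v.1, br u.1 v.2 + br u.2 v.1).

Lemma dual_bracket_is_lie (L : zmodType) (br : L -> L -> L) :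
  is_lie_bracket br -> is_lie_bracket (dual_bracket br).
Proof.
move=> hbr; case: (hbr) => hDl hDr hxx hJ; split.
- by move=> [a m] [b n] [c p]; rewrite /dual_bracket /= !pairD !hDl addrACA.
- by move=> [a m] [b n] [c p]; rewrite /dual_bracket /= !pairD !hDr addrACA.
- by move=> [a m]; rewrite /dual_bracket /= hxx (lie_anti hbr m) subrr.
move=> [a m] [b n] [c p]; rewrite /dual_bracket /= !pairD !hDr !addrA hJ.
by rewrite (ACl ((3*4*8)*(2*6*7)*(1*5*9)))%AC /= !hJ !addr0.
Qed.

Lemma rnest_cons (L : zmodType) (br : L -> L -> L) x s :
  ~~ nilp s -> rnest br (x :: s) = br x (rnest br s).
Proof. by case: s. Qed.

Section LieMorphism.
Variables (L M : zmodType) (brL : L -> L -> L) (brM : M -> M -> M) (f : L -> M).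
Hypothesis hf : is_lie_morph brL brM f.

Lemma lie_morph0 : f 0 = 0.
Proof. exact: morphD_0 hf.1. Qed.

Lemma lie_morph_rnest s : f (rnest brL s) = rnest brM (map f s).
Proof.
elim: s => [|x [|y t] IH] //=; first exact: lie_morph0.
by rewrite hf.2 IH.
Qed.

End LieMorphism.

Definition count_eq (Y : Type) (x : Y) (s : seq Y) : nat := count (fun y => `[< y = x >]) s.

Lemma count_eq_split (Y : Type) (x : Y) s :
  (0 < count_eq x s)%N -> exists b c, s = b ++ x :: c.
Proof.
elim: s => [|y s IH] //=; rewrite /count_eq /=.
case: (asboolP (y = x)) => [-> _|_ /IH [b [c ->]]]; first by exists [::], s.
by exists (y :: b), c.
Qed.

Lemma count_eq_repeat (Y : Type) (x : Y) s : (1 < count_eq x s)%N -> has_repeat s.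
Proof.
elim: s => [|y s IH] //; rewrite /count_eq /=.
case: (asboolP (y = x)) => [-> /= x_in_s|_ /IH [a [b [c [z ->]]]]].
  by have [b [c ->]] := count_eq_split x_in_s; exists [::], b, c, x.
by exists (y :: a), b, c, z.
Qed.

Inductive lie_generated (Y : Type) (L : zmodType) (br : L -> L -> L) (iL : Y -> L)
  : L -> Prop :=
| lie_gen_of y : lie_generated br iL (iL y)
| lie_gen0 : lie_generated br iL 0
| lie_genD a b :
    lie_generated br iL a -> lie_generated br iL b -> lie_generated br iL (a + b)
| lie_genN a : lie_generated br iL a -> lie_generated br iL (- a)
| lie_genR a b :
    lie_generated br iL a -> lie_generated br iL b -> lie_generated br iL (br a b).

Record lie_subring (Y : Type) (L : zmodType) (br : L -> L -> L) (iL : Y -> L) :=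
  LieSub { lie_sub_val :> L; lie_sub_mem : lie_generated br iL lie_sub_val }.

HB.instance Definition _ (Y : Type) (L : zmodType) (br : L -> L -> L) (iL : Y -> L) :=
  gen_eqMixin (lie_subring br iL).
HB.instance Definition _ (Y : Type) (L : zmodType) (br : L -> L -> L) (iL : Y -> L) :=
  gen_choiceMixin (lie_subring br iL).

Section LieSubring.
Variables (Y : Type) (L : zmodType) (br : L -> L -> L) (iL : Y -> L).
Local Notation S := (lie_subring br iL).
Implicit Types u v w : S.

Lemma lie_sub_inj u v : lie_sub_val u = lie_sub_val v -> u = v.
Proof.
case: u v => a ha [b hb] /= eq_ab; subst b.
by congr LieSub; apply: Prop_irrelevance.
Qed.

Definition lie_sub_add u v : S := LieSub (lie_genD (lie_sub_mem u) (lie_sub_mem v)).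
Definition lie_sub_opp u : S := LieSub (lie_genN (lie_sub_mem u)).
Definition lie_sub_br u v : S := LieSub (lie_genR (lie_sub_mem u) (lie_sub_mem v)).
Definition lie_sub_gen y : S := LieSub (lie_gen_of br iL y).

Fact lie_sub_addA : associative lie_sub_add.
Proof. by move=> u v w; apply: lie_sub_inj; rewrite /= addrA. Qed.
Fact lie_sub_addC : commutative lie_sub_add.
Proof. by move=> u v; apply: lie_sub_inj; rewrite /= addrC. Qed.
Fact lie_sub_add0 : left_id (LieSub (lie_gen0 br iL)) lie_sub_add.
Proof. by move=> u; apply: lie_sub_inj; rewrite /= add0r. Qed.
Fact lie_sub_addN : left_inverse (LieSub (lie_gen0 br iL)) lie_sub_opp lie_sub_add.
Proof. by move=> u; apply: lie_sub_inj; rewrite /= addNr. Qed.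

HB.instance Definition _ :=
  GRing.isZmodule.Build S lie_sub_addA lie_sub_addC lie_sub_add0 lie_sub_addN.

Lemma lie_sub_val_morph : is_lie_morph lie_sub_br br (@lie_sub_val Y L br iL).
Proof. by []. Qed.

Lemma lie_sub_is_lie : is_lie_bracket br -> is_lie_bracket lie_sub_br.
Proof.
case=> hDl hDr hxx hJ; split=> *; apply: lie_sub_inj => /=.
- exact: hDl.
- exact: hDr.
- exact: hxx.
- exact: hJ.
Qed.

End LieSubring.

Section DerivationRepresentation.
Variables (L : zmodType) (br : L -> L -> L) (D : L -> L).
Hypotheses (hbr : is_lie_bracket br) (DD : {morph D : a b / a + b}).
Hypothesis Dbr : forall a b, D (br a b) = br a (D b) + br (D a) b.

Fact lie_rep_subproof a :
  {morph (fun v : (L * int)%type => (br a v.1 + D a *~ v.2, 0 : int)) : v w / v + w}.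
Proof. by move=> [l n] [l' n']; rewrite /= (lieDr hbr) mulrzDr addrACA. Qed.

Definition lie_rep a : add_endo (L * int)%type := AddEndo (lie_rep_subproof a).

Lemma lie_rep_morph : is_lie_morph br (@commr _) lie_rep.
Proof.
split=> a b; apply: add_endoP => -[l n] /=.
  by rewrite (lieDl hbr) DD mulrzDl addrACA.
rewrite /commr /= pairN pairD subrr !mulr0z !addr0; congr pair.
rewrite Dbr (lie_jacobi hbr) (lie_anti hbr (D a)) !(lieDr hbr).
by rewrite !(morphD_Mz (lieDr hbr _)) mulrzBl opprD addrACA.
Qed.

End DerivationRepresentation.

Section ReducedFreeLie.
Variables (Y : Type) (L : zmodType) (br : L -> L -> L) (iL : Y -> L).
Hypothesis hL : is_reduced_free_lie br iL.

Let hbr : is_lie_bracket br. Proof. by case: hL. Qed.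
Let hrel : lie_relations br iL. Proof. by case: hL. Qed.

Lemma lie_relations_morph (M : zmodType) (brM : M -> M -> M) (f : L -> M) :
  is_lie_morph br brM f -> lie_relations brM (fun y => f (iL y)).
Proof.
move=> hf s hs; rewrite (map_comp f iL) -(lie_morph_rnest hf) hrel //.
exact: lie_morph0 hf.
Qed.

Lemma reduced_free_lie_morph_eq (M : zmodType) (brM : M -> M -> M) (f g : L -> M) :
  is_lie_bracket brM -> is_lie_morph br brM f -> is_lie_morph br brM g ->
  (forall y, f (iL y) = g (iL y)) -> f =1 g.
Proof.
move=> hbrM hf hg eq_fg a; case: hL => _ _ /(_ M brM _ hbrM (lie_relations_morph hf)).
by case=> F [_ _ uniqF]; rewrite (uniqF f hf) // (uniqF g hg).
Qed.

Lemma reduced_free_lie_generated a : lie_generated br iL a.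
Proof.
have relS : lie_relations (@lie_sub_br Y L br iL) (lie_sub_gen br iL).
  move=> s hs; apply: lie_sub_inj.
  by rewrite (lie_morph_rnest (lie_sub_val_morph _ _)) -map_comp; apply: hrel.
case: hL => _ _ /(_ _ _ _ (lie_sub_is_lie iL hbr) relS) [F [hF FiL _]].
have hvalF : is_lie_morph br br (fun b => lie_sub_val (F b)).
  by split=> u v; rewrite ?hF.1 ?hF.2.
have -> : a = lie_sub_val (F a).
  apply: (reduced_free_lie_morph_eq (f := id) (g := fun b => lie_sub_val (F b)) hbr)
    => // y.
  by rewrite FiL.
exact: lie_sub_mem.
Qed.

Definition lie_word (s : seq Y) : L := rnest br (map iL s).

Lemma lie_word_cons y t : ~~ nilp t -> lie_word (y :: t) = br (iL y) (lie_word t).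
Proof. by move=> t_ne0; rewrite /lie_word map_cons rnest_cons // /nilp size_map. Qed.

Definition lie_comb (r : seq (int * seq Y)) : L := \sum_(p <- r) lie_word p.2 *~ p.1.

Definition in_word_span (a : L) : Prop := exists r, a = lie_comb r.

Lemma in_word_span0 : in_word_span 0.
Proof. by exists [::]; rewrite /lie_comb big_nil. Qed.

Lemma in_word_spanD a b : in_word_span a -> in_word_span b -> in_word_span (a + b).
Proof. by move=> [r ->] [r' ->]; exists (r ++ r'); rewrite /lie_comb big_cat. Qed.

Lemma in_word_spanMz a k : in_word_span a -> in_word_span (a *~ k).
Proof.
move=> [r ->]; exists [seq (p.1 * k, p.2) | p <- r].
by rewrite /lie_comb big_map mulrz_suml; apply: eq_bigr => p _; rewrite mulrzA.
Qed.

Lemma in_word_spanN a : in_word_span a -> in_word_span (- a).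
Proof. by move=> /(in_word_spanMz (-1)); rewrite mulrN1z. Qed.

Lemma in_word_span_sum (I : Type) (r : seq I) (F : I -> L) :
  (forall i, in_word_span (F i)) -> in_word_span (\sum_(i <- r) F i).
Proof. by move=> spF; apply: big_ind => //; [exact: in_word_span0 | exact: in_word_spanD].
Qed.

Lemma in_word_span_word s : in_word_span (lie_word s).
Proof. by exists [:: (1, s)]; rewrite /lie_comb big_seq1. Qed.

Lemma in_word_span_ad y a : in_word_span a -> in_word_span (br (iL y) a).
Proof.
move=> [r ->]; rewrite /lie_comb (morphD_sum (lieDr hbr _)).
apply: in_word_span_sum => -[k t]; rewrite /= (morphD_Mz (lieDr hbr _)).
apply: in_word_spanMz; case: (boolP (nilp t)) => [/nilP -> | t_ne0].
  by rewrite (lie0r hbr); apply: in_word_span0.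
by rewrite -lie_word_cons //; apply: in_word_span_word.
Qed.

Lemma in_word_span_br_word s b : in_word_span b -> in_word_span (br (lie_word s) b).
Proof.
elim: s b => [|y [|z t] IH] b spb.
- by rewrite /lie_word /= (lie0l hbr); apply: in_word_span0.
- exact: in_word_span_ad.
rewrite lie_word_cons // (lie_jacobi hbr).
by apply/in_word_spanD/in_word_spanN; [apply/in_word_span_ad/IH | apply/IH/in_word_span_ad].
Qed.

Lemma in_word_span_br a b : in_word_span a -> in_word_span b -> in_word_span (br a b).
Proof.
move=> [r ->] spb; rewrite /lie_comb (morphD_sum (lieDl hbr _)).
apply: in_word_span_sum => p; rewrite (morphD_Mz (lieDl hbr _)).
exact/in_word_spanMz/in_word_span_br_word.
Qed.

Lemma reduced_free_lie_word_span a : in_word_span a.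
Proof.
elim: (reduced_free_lie_generated a) => [y||a' b' _ spa _ spb|a' _ spa|a' b' _ spa _ spb].
- exact: (in_word_span_word [:: y]).
- exact: in_word_span0.
- exact: in_word_spanD.
- exact: in_word_spanN.
- exact: in_word_span_br.
Qed.

Definition counts_letter (x : Y) (D : L -> L) : Prop :=
  {morph D : a b / a + b} /\ forall s, D (lie_word s) = lie_word s *+ count_eq x s.

Lemma lie_word_count x s : lie_word s *+ count_eq x s = lie_word s *+ (0 < count_eq x s)%N.
Proof.
case: count_eq (@count_eq_repeat _ x s) => [|[|c]] // rep.
by rewrite /lie_word hrel ?mul0rn //; apply: rep.
Qed.

Lemma counts_letter_comb x D r : counts_letter x D ->
  D (lie_comb r) = \sum_(p <- r | (0 < count_eq x p.2)%N) lie_word p.2 *~ p.1.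
Proof.
case=> DD Dword; rewrite /lie_comb (morphD_sum DD) [RHS]big_mkcond.
apply: eq_bigr => -[k t] _; rewrite /= (morphD_Mz DD) Dword lie_word_count mulrb.
by case: ifP; rewrite ?mul0rz.
Qed.

Lemma eq0_of_counts_letter a :
  (forall x, exists2 D, counts_letter x D & D a = 0) -> a = 0.
Proof.
have [r ->] := reduced_free_lie_word_span a.
have [n] := ubnP (size r); elim: n r => // n IH [|[k [|x t]] r] /= size_r killed.
- by rewrite /lie_comb big_nil.
- have e : lie_comb ((k, [::]) :: r) = lie_comb r.
    by rewrite /lie_comb big_cons /= mul0rz add0r.
  by rewrite e; apply: IH => // y; rewrite -e; apply: killed.
set r0 := (k, x :: t) :: r; pose P (p : int * seq Y) := (0 < count_eq x p.2)%N.
have [D cD D0] := killed x.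
have e : lie_comb r0 = lie_comb [seq p <- r0 | ~~ P p].
  by rewrite /lie_comb big_filter [LHS](bigID P) /= -(counts_letter_comb _ cD) D0 add0r.
rewrite e; apply: IH => [|y]; last by rewrite -e; apply: killed.
have Pr0 : P (k, x :: t) by rewrite /P /count_eq /= asboolT.
by rewrite /= Pr0 size_filter (leq_ltn_trans (count_size _ _)).
Qed.

Lemma rnest_dual_letter x s :
  rnest (dual_bracket br) [seq (iL y, iL y *+ `[< y = x >]) | y <- s]
  = (lie_word s, lie_word s *+ count_eq x s).
Proof.
elim: s => [|y [|z t] IH] //; first by rewrite /= /count_eq /= addn0.
rewrite map_cons rnest_cons // IH /dual_bracket /=; congr pair.
rewrite (morphD_Mn (lieDr hbr _)) (morphD_Mn (lieDl hbr _)) -mulrnDr addnC.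
by rewrite /count_eq /=.
Qed.

Lemma counts_letter_exists x : exists2 D, counts_letter x D &
  forall a b, D (br a b) = br a (D b) + br (D a) b.
Proof.
pose g y := (iL y, iL y *+ `[< y = x >]).
have relg : lie_relations (dual_bracket br) g.
  by move=> s rep; rewrite rnest_dual_letter /lie_word hrel // mul0rn.
case: hL => _ _ /(_ _ _ _ (dual_bracket_is_lie hbr) relg) [F [hF Fg _]].
have F1 a : (F a).1 = a.
  have hF1 : is_lie_morph br br (fun b => (F b).1).
    by split=> u v; rewrite ?hF.1 ?hF.2.
  symmetry; apply: (reduced_free_lie_morph_eq (f := id) (g := fun b => (F b).1) hbr)
    => // y.
  by rewrite Fg.
exists (fun a => (F a).2).
  split=> [u v|s]; first by rewrite hF.1.
  by rewrite /lie_word (lie_morph_rnest hF) -map_comp (eq_map Fg) rnest_dual_letter.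
by move=> u v; rewrite hF.2 /dual_bracket /= !F1.
Qed.

Definition ad_word (s : seq Y) (l : L) : L := foldr (fun y => br (iL y)) l s.

Lemma ad_wordD s : {morph ad_word s : u v / u + v}.
Proof. by move=> u v; rewrite /ad_word; elim: s => //= y s ->; rewrite (lieDr hbr). Qed.

Lemma ad_word_lie_word s t : ~~ nilp t -> ad_word s (lie_word t) = lie_word (s ++ t).
Proof.
move=> t_ne0; elim: s => //= y s ->.
by rewrite lie_word_cons // cat_nilp negb_and t_ne0 orbT.
Qed.

Lemma ad_word_repeat s l : has_repeat s -> ad_word s l = 0.
Proof.
move=> rep; have [r ->] := reduced_free_lie_word_span l.
rewrite /lie_comb (morphD_sum (ad_wordD s)) big1 // => -[k t] _.
rewrite (morphD_Mz (ad_wordD s)) /=; case: (boolP (nilp t)) => [/nilP -> | t_ne0].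
  by rewrite (morphD_0 (ad_wordD s)) mul0rz.
rewrite ad_word_lie_word // /lie_word hrel ?mul0rz //.
case: rep => [a [b [c [z ->]]]]; exists a, b, (c ++ t), z.
by rewrite -catA /= -catA.
Qed.

Lemma lie_rep_prod D s l :
  (\prod_(y <- s) lie_rep D hbr (iL y)) (l, 0) = (ad_word s l, 0).
Proof.
elim: s => [|y s IH]; first by rewrite big_nil.
by rewrite big_cons endo_mulE IH /= mulr0z addr0.
Qed.

Lemma lie_rep_relations x D : counts_letter x D ->
  alg_relations (fun y => lie_rep D hbr (iL y)).
Proof.
move=> [DD Dword] s; case/lastP: s => [|s z] rep.
  by case: rep => a [b [c [z]]]; case: a.
apply: add_endoP => -[l n]; rewrite -cats1 big_cat big_seq1 endo_mulE /=.
rewrite lie_rep_prod ad_wordD (morphD_Mz (ad_wordD s)).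
have -> : ad_word s (br (iL z) l) = ad_word (rcons s z) l by rewrite /ad_word foldr_rcons.
have Dz : D (iL z) = lie_word [:: z] *+ count_eq x [:: z] := Dword [:: z].
rewrite ad_word_repeat // Dz (morphD_Mn (ad_wordD s)) ad_word_lie_word //.
by rewrite /lie_word hrel ?cats1 // mul0rn mul0rz addr0.
Qed.

Lemma counts_letter_kernel (A : pzRingType) (iA : Y -> A) (phi : L -> A) x D :
  is_reduced_free_algebra iA -> is_lie_morph br (@commr A) phi ->
  (forall y, phi (iL y) = iA y) -> counts_letter x D ->
  (forall a b, D (br a b) = br a (D b) + br (D a) b) ->
  forall a, phi a = 0 -> D a = 0.
Proof.
move=> [_ univA] hphi phiY cD Dbr a phia0.
have [f [[fD fM _] fiA _]] := univA _ _ (lie_rep_relations cD).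
have hfphi : is_lie_morph br (@commr _) (fun b => f (phi b)).
  split=> u v; first by rewrite hphi.1 fD.
  by rewrite hphi.2 /commr fD (morphD_N fD) !fM.
have rep_a : lie_rep D hbr a = 0.
  rewrite (reduced_free_lie_morph_eq (commr_is_lie_bracket _)
    (lie_rep_morph hbr cD.1 Dbr) hfphi) => [|y]; last by rewrite phiY fiA.
  by rewrite phia0 (morphD_0 fD).
have := congr1 (fun g : add_endo _ => (g (0, 1)).1) rep_a.
by rewrite /= lie0r // add0r.
Qed.

End ReducedFreeLie.

Unset Implicit Arguments.
Set Strict Implicit.

Theorem proposition2p7 (Y : Type)
  (A : pzRingType) (iA : Y -> A) (hA : is_reduced_free_algebra iA)
  (L : zmodType) (br : L -> L -> L) (iL : Y -> L)
  (hL : is_reduced_free_lie br iL)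
  (phi : L -> A) (hphi : is_lie_morph br (@commr A) phi)
  (hphiY : forall y, phi (iL y) = iA y) :
  injective phi.
Proof.
move=> a b eq_ab; apply/eqP; rewrite -subr_eq0; apply/eqP.
apply: (eq0_of_counts_letter hL) => x.
have [D cD Dbr] := counts_letter_exists hL x.
exists D => //; apply: (counts_letter_kernel hL hA hphi hphiY cD Dbr).
have phiD : {morph phi : u v / u + v} := hphi.1.
by rewrite phiD (morphD_N phiD) eq_ab subrr.
Qed.
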